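(* Any function $K\in\mathfrak C_{cl}(\gamma_j)$ that vanishes on $\gamma_j$ can be written, in a neighbourhood of $\gamma_j$, $$K(x,\xi,y,\eta)=K(\xi,y,\eta)=a(\xi-c_o)+b\,y\eta$$ for some smooth functions $a,b\in\mathfrak C_{cl}(\gamma_j)$.
   Context: Let $\sigma$ be either $\sigma(x,y)=(x+2\pi,y)$ (direct case) or $\sigma(x,y)=(x+\pi,-y)$ (reverse case) acting on $\mathbb R^2$, and consider the cotangent bundle $T^*(\mathbb R^2/\sigma)$ with canonical coordinates $(x,y,\xi,\eta)$ (functions on it are functions on $T^*\mathbb R^2$ invariant under the cotangent lift of $\sigma$). Fix $c_o\in\mathbb R$ and let $\gamma_j=((\mathbb R\times\{0\})/\sigma)\times\{c_o\}\times\{0\}$, i.e. the circle $\{y=0,\ \xi=c_o,\ \eta=0\}$. The classical commutant is $\mathfrak C_{cl}(\gamma_j)=\{f\in C^\infty(T^*(\mathbb R^2/\sigma)) : \{f,\xi\}=\{f,y\eta\}=0 \text{ near }\gamma_j\}$, where $\{\cdot,\cdot\}$ is the Poisson bracket. *)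

From Stdlib Require Import Reals.
From Coquelicot Require Import Coquelicot.
Open Scope R_scope.

(* Functions on T*R^2 in canonical coordinates (x, y, xi, eta), curried in
   this order: f x y xi eta. *)
Definition F4 := R -> R -> R -> R -> R.

Definition dx (f : F4) : F4 := fun x y u v => Derive (fun t => f t y u v) x.
Definition dy (f : F4) : F4 := fun x y u v => Derive (fun t => f x t u v) y.
Definition dxi (f : F4) : F4 := fun x y u v => Derive (fun t => f x y t v) u.
Definition deta (f : F4) : F4 := fun x y u v => Derive (fun t => f x y u t) v.

Definition has_partials (f : F4) : Prop :=
  forall x y u v,
    ex_derive (fun t => f t y u v) x /\ ex_derive (fun t => f x t u v) y /\
    ex_derive (fun t => f x y t v) u /\ ex_derive (fun t => f x y u t) v.

Definition cont4 (f : F4) : Prop :=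
  forall x y u v eps, 0 < eps -> exists d, 0 < d /\
    forall x' y' u' v', Rabs (x' - x) < d -> Rabs (y' - y) < d ->
      Rabs (u' - u) < d -> Rabs (v' - v) < d ->
      Rabs (f x' y' u' v' - f x y u v) < eps.

Fixpoint Ck (k : nat) (f : F4) : Prop :=
  match k with
  | O => cont4 f
  | S k => cont4 f /\ has_partials f /\
           Ck k (dx f) /\ Ck k (dy f) /\ Ck k (dxi f) /\ Ck k (deta f)
  end.

Definition smooth (f : F4) : Prop := forall k, Ck k f.

(* Poisson bracket for the canonical symplectic form dxi/\dx + deta/\dy *)
Definition poisson (f g : F4) : F4 := fun x y u v =>
  dxi f x y u v * dx g x y u v - dx f x y u v * dxi g x y u v
  + deta f x y u v * dy g x y u v - dy f x y u v * deta g x y u v.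

Definition xi_fun : F4 := fun _ _ u _ => u.
Definition yeta_fun : F4 := fun _ y _ v => y * v.

Inductive sigma_case := Direct | Reverse.

(* Invariance under the cotangent lift of sigma:
   Direct : (x,y,xi,eta) |-> (x+2pi, y, xi, eta)
   Reverse: (x,y,xi,eta) |-> (x+pi, -y, xi, -eta) *)
Definition sigma_invariant (s : sigma_case) (f : F4) : Prop :=
  match s with
  | Direct => forall x y u v, f (x + 2 * PI) y u v = f x y u v
  | Reverse => forall x y u v, f (x + PI) (- y) u (- v) = f x y u v
  end.

(* smooth functions on T*(R^2/sigma) *)
Definition Cinf_quot (s : sigma_case) (f : F4) : Prop :=
  smooth f /\ sigma_invariant s f.

Definition open4 (U : R -> R -> R -> R -> Prop) : Prop :=
  forall x y u v, U x y u v -> exists d, 0 < d /\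
    forall x' y' u' v', Rabs (x' - x) < d -> Rabs (y' - y) < d ->
      Rabs (u' - u) < d -> Rabs (v' - v) < d -> U x' y' u' v'.

(* P holds in a neighbourhood of (the preimage in T*R^2 of)
   gamma_j = {y = 0, xi = c, eta = 0}. *)
Definition near_gamma (c : R) (P : R -> R -> R -> R -> Prop) : Prop :=
  exists U, open4 U /\ (forall x, U x 0 c 0) /\
    forall x y u v, U x y u v -> P x y u v.

Definition Ccl (s : sigma_case) (c : R) (f : F4) : Prop :=
  Cinf_quot s f /\
  near_gamma c (fun x y u v =>
    poisson f xi_fun x y u v = 0 /\ poisson f yeta_fun x y u v = 0).

From Stdlib Require Import Reals Lra.
From Coquelicot Require Import Coquelicot.
From Stdlib Require Import Classical FunctionalExtensionality IndefiniteDescription.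
Open Scope R_scope.

(* Near gamma the two brackets are -dx K and the Euler-type derivative
   eta d_eta K - y d_y K; compactness of gamma and sigma-periodicity in x make both
   vanish on a whole box |y|, |xi - c|, |eta| < d.  On that box K vanishes on the axes
   {xi = c, y = 0} and {xi = c, eta = 0}, so Hadamard's lemma gives
   K = a (xi - c) + b y eta, with a the integral quotient of K - K|_{xi=c} by xi - c and
   b obtained by dividing K|_{xi=c} by y and then by eta.  These parametric integrals are
   smooth and sigma-invariant.  Finally, both derivations kill xi - c and y eta and
   commute with restriction to xi = c, so (xi - c) D a and y eta D b are values of D K,
   hence zero; by continuity D a = D b = 0 on the whole box. *)

Definition cont1 (w : R -> R) : Prop := forall t, continuous w t.

Definition uncurry4 (f : F4) (p : R * R * R * R) : R :=
  f (fst (fst (fst p))) (snd (fst (fst p))) (snd (fst p)) (snd p).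

Lemma cont4_continuous f : cont4 f -> forall p, continuous (uncurry4 f) p.
Proof.
  intros Hf [[[x y] u] v].
  apply filterlim_locally; intro eps.
  destruct (Hf x y u v eps (cond_pos eps)) as [d [Hd Hball]].
  exists (mkposreal d Hd); intros [[[x' y'] u'] v'] [[[H1 H2] H3] H4].
  apply Hball; assumption.
Qed.

Lemma continuous_cont4 f : (forall p, continuous (uncurry4 f) p) -> cont4 f.
Proof.
  intros Hf x y u v eps Heps.
  destruct (proj1 (filterlim_locally _ _) (Hf (x, y, u, v)) (mkposreal eps Heps))
    as [d Hd].
  exists d; split; [apply cond_pos|].
  intros x' y' u' v' H1 H2 H3 H4.
  apply (Hd (x', y', u', v')); repeat split; assumption.
Qed.

Lemma continuous_pair {T U V : UniformSpace} (f : T -> U) (g : T -> V) x :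
  continuous f x -> continuous g x -> continuous (fun z => (f z, g z)) x.
Proof.
  intros Hf Hg. apply filterlim_locally; intro eps.
  generalize (filter_and _ _ (proj1 (filterlim_locally _ _) Hf eps)
                (proj1 (filterlim_locally _ _) Hg eps)).
  apply filter_imp. intros z [H1 H2]; split; assumption.
Qed.

Lemma continuous_fst_comp {U V W : UniformSpace} (h : U -> V * W) p :
  continuous h p -> continuous (fun z => fst (h z)) p.
Proof.
  intro Hh. apply (continuous_comp h fst); [exact Hh|]. destruct (h p); apply continuous_fst.
Qed.

Lemma continuous_snd_comp {U V W : UniformSpace} (h : U -> V * W) p :
  continuous h p -> continuous (fun z => snd (h z)) p.
Proof.
  intro Hh. apply (continuous_comp h snd); [exact Hh|]. destruct (h p); apply continuous_snd.
Qed.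

Lemma continuous_Rmult {U : UniformSpace} (f g : U -> R) x :
  continuous f x -> continuous g x -> continuous (fun z => f z * g z) x.
Proof. exact (continuous_mult f g x). Qed.

Lemma continuous_Rplus {U : UniformSpace} (f g : U -> R) x :
  continuous f x -> continuous g x -> continuous (fun z => f z + g z) x.
Proof. exact (@continuous_plus U R_AbsRing R_NormedModule f g x). Qed.

Lemma continuous_Rminus {U : UniformSpace} (f g : U -> R) x :
  continuous f x -> continuous g x -> continuous (fun z => f z - g z) x.
Proof. exact (@continuous_minus U R_AbsRing R_NormedModule f g x). Qed.

Lemma continuous_cont4_comp {U : UniformSpace} (f : F4) (a b c d : U -> R) p :
  cont4 f -> continuous a p -> continuous b p -> continuous c p -> continuous d p ->
  continuous (fun z => f (a z) (b z) (c z) (d z)) p.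
Proof.
  intros Hf Ha Hb Hc Hd.
  apply (continuous_comp (fun z => (a z, b z, c z, d z)) (uncurry4 f)).
  - repeat apply continuous_pair; assumption.
  - apply cont4_continuous; assumption.
Qed.

Ltac continuous_proj :=
  repeat first [apply continuous_fst_comp | apply continuous_snd_comp]; apply continuous_id.

Ltac continuous_poly :=
  repeat first [ apply continuous_const | apply continuous_id
               | apply continuous_Rmult | apply continuous_Rplus ].

(** * Parametric integrals over [0,1] *)

Definition integral01 (g : R -> F4) : F4 :=
  fun x y u v => RInt (fun t => g t x y u v) 0 1.

Definition uncurry5 (g : R -> F4) (q : R * (R * R * R * R)) : R :=
  g (fst q) (fst (fst (fst (snd q)))) (snd (fst (fst (snd q)))) (snd (fst (snd q)))
    (snd (snd q)).

Lemma continuous_slice (g : R -> F4) x y u v :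
  (forall q, continuous (uncurry5 g) q) -> cont1 (fun t => g t x y u v).
Proof.
  intros Hg t.
  exact (continuous_comp (fun t => (t, (x, y, u, v))) (uncurry5 g) t
    (continuous_pair _ _ _ (continuous_id t) (continuous_const _ t)) (Hg _)).
Qed.

Lemma ex_RInt01 (f : R -> R) : cont1 f -> ex_RInt f 0 1.
Proof. intro Hf. apply (@ex_RInt_continuous R_CompleteNormedModule). intros; apply Hf. Qed.

(* Uniform continuity of [g] on the compact [0,1] x {p} gives one [d] for all [t]. *)
Lemma cont4_integral01 (g : R -> F4) :
  (forall q, continuous (uncurry5 g) q) -> cont4 (integral01 g).
Proof.
  intros Hg x y u v eps Heps.
  assert (Hdelta : forall t, exists d : posreal, forall q,
    ball (t, (x, y, u, v)) d q -> Rabs (uncurry5 g q - g t x y u v) < eps / 4).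
  { intro t. assert (He : 0 < eps / 4) by lra.
    destruct (proj1 (filterlim_locally _ _) (Hg (t, (x, y, u, v))) (mkposreal _ He))
      as [d Hd].
    exists d. exact Hd. }
  set (delta := fun t => proj1_sig (constructive_indefinite_description _ (Hdelta t))).
  assert (Hball : forall t q, ball (t, (x, y, u, v)) (delta t) q ->
    Rabs (uncurry5 g q - g t x y u v) < eps / 4).
  { intro t. unfold delta. destruct (constructive_indefinite_description _ (Hdelta t)); auto. }
  destruct (compactness_value_1d 0 1 delta) as [d Hcomp].
  exists d; split; [apply cond_pos|].
  intros x' y' u' v' H1 H2 H3 H4.
  assert (Hpt : forall t, 0 <= t <= 1 -> Rabs (g t x' y' u' v' - g t x y u v) < eps / 2).
  { intros t Ht. apply NNPP; intro Hn. apply (Hcomp t Ht).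
    intros [t0 [_ [Htt Hdt]]]. apply Hn.
    assert (B1 : Rabs (g t x' y' u' v' - g t0 x y u v) < eps / 4).
    { apply (Hball t0 (t, (x', y', u', v'))).
      split; [|repeat split];
        [change (Rabs (t - t0) < delta t0) | change (Rabs (x' - x) < delta t0)
        | change (Rabs (y' - y) < delta t0) | change (Rabs (u' - u) < delta t0)
        | change (Rabs (v' - v) < delta t0)]; lra. }
    assert (B2 : Rabs (g t x y u v - g t0 x y u v) < eps / 4).
    { apply (Hball t0 (t, (x, y, u, v))).
      split; [|repeat split];
        [change (Rabs (t - t0) < delta t0) | change (Rabs (x - x) < delta t0)
        | change (Rabs (y - y) < delta t0) | change (Rabs (u - u) < delta t0)
        | change (Rabs (v - v) < delta t0)];
        rewrite ?Rminus_eq_0, ?Rabs_R0; try lra; apply cond_pos. }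
    destruct (Rabs_def2 _ _ B1), (Rabs_def2 _ _ B2). apply Rabs_def1; lra. }
  assert (Hex : forall x y u v, ex_RInt (fun t => g t x y u v) 0 1).
  { intros. apply ex_RInt01, continuous_slice, Hg. }
  unfold integral01.
  rewrite <- (RInt_minus _ _ 0 1 (Hex _ _ _ _) (Hex _ _ _ _)).
  eapply Rle_lt_trans.
  - apply abs_RInt_le_const with (M := eps / 2); [lra| |].
    + exact (ex_RInt_minus _ _ 0 1 (Hex _ _ _ _) (Hex _ _ _ _)).
    + intros t Ht; left; apply Hpt, Ht.
  - lra.
Qed.

Lemma is_derive_integral01 (G G' : R -> R -> R) z0 :
  (forall z t, is_derive (fun z => G z t) z (G' z t)) ->
  (forall z t, continuous (fun p : R * R => G' (fst p) (snd p)) (z, t)) ->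
  (forall z, cont1 (G z)) ->
  is_derive (fun z => RInt (G z) 0 1) z0 (RInt (G' z0) 0 1).
Proof.
  intros HD HC HT.
  assert (E : (fun z t => Derive (fun z => G z t) z) = G').
  { do 2 (apply functional_extensionality; intro). apply is_derive_unique, HD. }
  rewrite <- E.
  apply (is_derive_RInt_param G 0 1 z0).
  - apply filter_forall. intros. eexists. apply HD.
  - intros. rewrite E. apply continuity_2d_pt_filterlim, HC.
  - apply filter_forall. intros. apply ex_RInt01, HT.
Qed.

Lemma is_derive_affine_comp (F : R -> R) a b w z D :
  is_derive F (a * z + b) D -> is_derive (fun z => w * F (a * z + b)) z (w * a * D).
Proof.
  intro HF.
  assert (Hlin : is_derive (fun z => a * z + b) z a).
  { auto_derive; [exact I | ring]. }
  replace (w * a * D) with (w * (a * D)) by ring.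
  exact (is_derive_scal _ _ w _ (is_derive_comp F _ z D a HF Hlin)).
Qed.

Lemma smooth_cont4 f : smooth f -> cont4 f.
Proof. intro Hf; exact (Hf O). Qed.

Lemma smooth_has_partials f : smooth f -> has_partials f.
Proof. intro Hf; exact (proj1 (proj2 (Hf 1%nat))). Qed.

Lemma smooth_dx f : smooth f -> smooth (dx f).
Proof. intros Hf k; apply (Hf (S k)). Qed.

Lemma smooth_dy f : smooth f -> smooth (dy f).
Proof. intros Hf k; apply (Hf (S k)). Qed.

Lemma smooth_dxi f : smooth f -> smooth (dxi f).
Proof. intros Hf k; apply (Hf (S k)). Qed.

Lemma smooth_deta f : smooth f -> smooth (deta f).
Proof. intros Hf k; apply (Hf (S k)). Qed.

Ltac smooth_derivs :=
  repeat first [ assumption | apply smooth_dx | apply smooth_dy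
               | apply smooth_dxi | apply smooth_deta ].

Lemma ex_derive_dx f x y u v : has_partials f -> ex_derive (fun t => f t y u v) x.
Proof. intro Hf. exact (proj1 (Hf x y u v)). Qed.

Lemma ex_derive_dy f x y u v : has_partials f -> ex_derive (fun t => f x t u v) y.
Proof. intro Hf. exact (proj1 (proj2 (Hf x y u v))). Qed.

Lemma ex_derive_dxi f x y u v : has_partials f -> ex_derive (fun t => f x y t v) u.
Proof. intro Hf. exact (proj1 (proj2 (proj2 (Hf x y u v)))). Qed.

Lemma ex_derive_deta f x y u v : has_partials f -> ex_derive (fun t => f x y u t) v.
Proof. intro Hf. exact (proj2 (proj2 (proj2 (Hf x y u v)))). Qed.

Lemma is_derive_dx f x y u v :
  has_partials f -> is_derive (fun t => f t y u v) x (dx f x y u v).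
Proof. intro Hf. apply Derive_correct, ex_derive_dx, Hf. Qed.

Lemma is_derive_dy f x y u v :
  has_partials f -> is_derive (fun t => f x t u v) y (dy f x y u v).
Proof. intro Hf. apply Derive_correct, ex_derive_dy, Hf. Qed.

Lemma is_derive_dxi f x y u v :
  has_partials f -> is_derive (fun t => f x y t v) u (dxi f x y u v).
Proof. intro Hf. apply Derive_correct, ex_derive_dxi, Hf. Qed.

Lemma is_derive_deta f x y u v :
  has_partials f -> is_derive (fun t => f x y u t) v (deta f x y u v).
Proof. intro Hf. apply Derive_correct, ex_derive_deta, Hf. Qed.

Lemma cont1_mul (a b : R -> R) : cont1 a -> cont1 b -> cont1 (fun t => a t * b t).
Proof. intros Ha Hb t. apply continuous_Rmult; auto. Qed.

Section Rescaled.

Variables my ny mu nu mv nv : R -> R.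
Hypotheses (Hmy : cont1 my) (Hny : cont1 ny) (Hmu : cont1 mu) (Hnu : cont1 nu)
  (Hmv : cont1 mv) (Hnv : cont1 nv).

Definition rescaled (w : R -> R) (f : F4) : R -> F4 :=
  fun t x y u v => w t * f x (my t * y + ny t) (mu t * u + nu t) (mv t * v + nv t).

Lemma continuous_rescaled w f {U : UniformSpace} (T X Y Z V : U -> R) p :
  cont1 w -> cont4 f ->
  continuous T p -> continuous X p -> continuous Y p -> continuous Z p -> continuous V p ->
  continuous (fun q => rescaled w f (T q) (X q) (Y q) (Z q) (V q)) p.
Proof.
  intros Hw Hf HT HX HY HZ HV. unfold rescaled.
  assert (Hc : forall m, cont1 m -> continuous (fun q => m (T q)) p).
  { intros m Hm. apply (continuous_comp T m); auto. }
  apply continuous_Rmult; [auto|].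
  apply continuous_cont4_comp; auto; apply continuous_Rplus; auto; apply continuous_Rmult; auto.
Qed.

Lemma continuous_uncurry5_rescaled w f :
  cont1 w -> cont4 f -> forall q, continuous (uncurry5 (rescaled w f)) q.
Proof. intros Hw Hf q. apply continuous_rescaled; auto; continuous_proj. Qed.

Section Family.

Variables (w : R -> R) (f : F4).
Hypotheses (Hw : cont1 w) (Hf : smooth f).

Lemma is_derive_integral01_dx x y u v :
  is_derive (fun z => integral01 (rescaled w f) z y u v) x
    (integral01 (rescaled w (dx f)) x y u v).
Proof.
  apply (is_derive_integral01 (fun z t => rescaled w f t z y u v)
                              (fun z t => rescaled w (dx f) t z y u v)).
  - intros z t. apply is_derive_scal, is_derive_dx, smooth_has_partials, Hf.
  - intros z t. apply continuous_rescaled; auto;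
      try continuous_proj; try apply continuous_const; apply smooth_cont4; smooth_derivs.
  - intros z t. apply continuous_rescaled; auto;
      try apply continuous_id; try apply continuous_const; apply smooth_cont4, Hf.
Qed.

Lemma is_derive_integral01_dy x y u v :
  is_derive (fun z => integral01 (rescaled w f) x z u v) y
    (integral01 (rescaled (fun t => w t * my t) (dy f)) x y u v).
Proof.
  apply (is_derive_integral01 (fun z t => rescaled w f t x z u v)
                              (fun z t => rescaled (fun t => w t * my t) (dy f) t x z u v)).
  - intros z t. apply (is_derive_affine_comp (fun s => f x s _ _)).
    apply is_derive_dy, smooth_has_partials, Hf.
  - intros z t. apply continuous_rescaled; auto using cont1_mul;
      try continuous_proj; try apply continuous_const; apply smooth_cont4; smooth_derivs.
  - intros z t. apply continuous_rescaled; auto;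
      try apply continuous_id; try apply continuous_const; apply smooth_cont4, Hf.
Qed.

Lemma is_derive_integral01_dxi x y u v :
  is_derive (fun z => integral01 (rescaled w f) x y z v) u
    (integral01 (rescaled (fun t => w t * mu t) (dxi f)) x y u v).
Proof.
  apply (is_derive_integral01 (fun z t => rescaled w f t x y z v)
                              (fun z t => rescaled (fun t => w t * mu t) (dxi f) t x y z v)).
  - intros z t. apply (is_derive_affine_comp (fun s => f x _ s _)).
    apply is_derive_dxi, smooth_has_partials, Hf.
  - intros z t. apply continuous_rescaled; auto using cont1_mul;
      try continuous_proj; try apply continuous_const; apply smooth_cont4; smooth_derivs.
  - intros z t. apply continuous_rescaled; auto;
      try apply continuous_id; try apply continuous_const; apply smooth_cont4, Hf.
Qed.

Lemma is_derive_integral01_deta x y u v :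
  is_derive (fun z => integral01 (rescaled w f) x y u z) v
    (integral01 (rescaled (fun t => w t * mv t) (deta f)) x y u v).
Proof.
  apply (is_derive_integral01 (fun z t => rescaled w f t x y u z)
                              (fun z t => rescaled (fun t => w t * mv t) (deta f) t x y u z)).
  - intros z t. apply (is_derive_affine_comp (fun s => f x _ _ s)).
    apply is_derive_deta, smooth_has_partials, Hf.
  - intros z t. apply continuous_rescaled; auto using cont1_mul;
      try continuous_proj; try apply continuous_const; apply smooth_cont4; smooth_derivs.
  - intros z t. apply continuous_rescaled; auto;
      try apply continuous_id; try apply continuous_const; apply smooth_cont4, Hf.
Qed.

End Family.

Lemma Ck_integral01_rescaled k : forall w f, cont1 w -> smooth f ->
  Ck k (integral01 (rescaled w f)).
Proof.
  induction k as [|k IHk]; intros w f Hw Hf.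
  - apply cont4_integral01, continuous_uncurry5_rescaled; auto. apply smooth_cont4, Hf.
    split; [apply cont4_integral01, continuous_uncurry5_rescaled; auto; apply smooth_cont4, Hf|].
    split.
    { intros x y u v. repeat split; eexists.
      - apply is_derive_integral01_dx; auto.
      - apply is_derive_integral01_dy; auto.
      - apply is_derive_integral01_dxi; auto.
      - apply is_derive_integral01_deta; auto. }
    repeat split.
    + replace (dx (integral01 (rescaled w f))) with (integral01 (rescaled w (dx f))).
      * apply IHk; smooth_derivs.
      * do 4 (apply functional_extensionality; intro). symmetry.
        apply is_derive_unique, is_derive_integral01_dx; auto.
    + replace (dy (integral01 (rescaled w f)))
        with (integral01 (rescaled (fun t => w t * my t) (dy f))).
      * apply IHk; auto using cont1_mul; smooth_derivs.
      * do 4 (apply functional_extensionality; intro). symmetry.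
        apply is_derive_unique, is_derive_integral01_dy; auto.
    + replace (dxi (integral01 (rescaled w f)))
        with (integral01 (rescaled (fun t => w t * mu t) (dxi f))).
      * apply IHk; auto using cont1_mul; smooth_derivs.
      * do 4 (apply functional_extensionality; intro). symmetry.
        apply is_derive_unique, is_derive_integral01_dxi; auto.
    + replace (deta (integral01 (rescaled w f)))
        with (integral01 (rescaled (fun t => w t * mv t) (deta f))).
      * apply IHk; auto using cont1_mul; smooth_derivs.
      * do 4 (apply functional_extensionality; intro). symmetry.
        apply is_derive_unique, is_derive_integral01_deta; auto.
Qed.

Lemma smooth_integral01_rescaled w f :
  cont1 w -> smooth f -> smooth (integral01 (rescaled w f)).
Proof. intros Hw Hf k. apply Ck_integral01_rescaled; auto. Qed.

End Rescaled.

(** * Hadamard quotients *)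

Lemma hadamard (F F' : R -> R) p q :
  (forall z, is_derive F z (F' z)) -> cont1 F' ->
  p * RInt (fun t => F' (p * t + q)) 0 1 = F (p + q) - F q.
Proof.
  intros HD HC.
  assert (Hcomp : cont1 (fun t => F' (p * t + q))).
  { intro t. apply (continuous_comp (fun t => p * t + q) F'); [continuous_poly | apply HC]. }
  transitivity (RInt F' (p * 0 + q) (p * 1 + q)).
  - rewrite <- (RInt_comp_lin (V := R_CompleteNormedModule)), RInt_scal;
      [reflexivity | apply ex_RInt01, Hcomp |].
    apply (@ex_RInt_continuous R_CompleteNormedModule). intros; apply HC.
  - replace (p * 0 + q) with q by ring. replace (p * 1 + q) with (p + q) by ring.
    apply is_RInt_unique, (is_RInt_derive F F'); intros; [apply HD | apply HC].
Qed.

Definition quot_xi (c : R) (f : F4) : F4 :=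
  integral01 (rescaled (fun _ => 1) (fun _ => 0) (fun t => t) (fun t => (1 - t) * c)
                       (fun _ => 1) (fun _ => 0) (fun _ => 1) (dxi f)).

Definition quot_y (c : R) (f : F4) : F4 :=
  integral01 (rescaled (fun t => t) (fun _ => 0) (fun _ => 0) (fun _ => c)
                       (fun _ => 1) (fun _ => 0) (fun _ => 1) (dy f)).

Definition quot_eta (f : F4) : F4 :=
  integral01 (rescaled (fun _ => 1) (fun _ => 0) (fun _ => 1) (fun _ => 0)
                       (fun t => t) (fun _ => 0) (fun _ => 1) (deta f)).

Ltac cont1_affine :=
  intro; repeat first [ apply continuous_const | apply continuous_id | apply continuous_Rmult
                      | apply (continuous_minus (fun _ => 1) (fun t => t)) ].

Lemma smooth_quot_xi c f : smooth f -> smooth (quot_xi c f).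
Proof.
  intro Hf. apply smooth_integral01_rescaled; [cont1_affine .. | apply smooth_dxi, Hf].
Qed.

Lemma smooth_quot_y c f : smooth f -> smooth (quot_y c f).
Proof.
  intro Hf. apply smooth_integral01_rescaled; [cont1_affine .. | apply smooth_dy, Hf].
Qed.

Lemma smooth_quot_eta f : smooth f -> smooth (quot_eta f).
Proof.
  intro Hf. apply smooth_integral01_rescaled; [cont1_affine .. | apply smooth_deta, Hf].
Qed.

Lemma quot_xi_RInt c f x y u v :
  quot_xi c f x y u v = RInt (fun t => dxi f x y ((u - c) * t + c) v) 0 1.
Proof.
  unfold quot_xi, integral01, rescaled. apply RInt_ext; intros t _.
  rewrite Rmult_1_l. f_equal; ring.
Qed.

(* The [+ 0] keeps the argument in the shape [p * t + q] used by [hadamard]. *)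
Lemma quot_y_RInt c f x y u v :
  quot_y c f x y u v = RInt (fun t => dy f x (y * t + 0) c v) 0 1.
Proof.
  unfold quot_y, integral01, rescaled. apply RInt_ext; intros t _.
  rewrite Rmult_1_l. f_equal; ring.
Qed.

Lemma quot_eta_RInt f x y u v :
  quot_eta f x y u v = RInt (fun t => deta f x y u (v * t + 0)) 0 1.
Proof.
  unfold quot_eta, integral01, rescaled. apply RInt_ext; intros t _.
  rewrite Rmult_1_l. f_equal; ring.
Qed.

Section QuotientSpec.

Variable f : F4.
Hypothesis Hf : smooth f.

Let Hpf := smooth_has_partials f Hf.

Lemma quot_xi_spec c x y u v :
  (u - c) * quot_xi c f x y u v = f x y u v - f x y c v.
Proof.
  rewrite quot_xi_RInt, (hadamard (fun z => f x y z v) (fun z => dxi f x y z v)).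
  - replace (u - c + c) with u by ring. reflexivity.
  - intro; apply is_derive_dxi, Hpf.
  - intro; apply continuous_cont4_comp; [apply smooth_cont4; smooth_derivs | continuous_poly ..].
Qed.

Lemma quot_y_spec c x y u v :
  y * quot_y c f x y u v = f x y c v - f x 0 c v.
Proof.
  rewrite quot_y_RInt, (hadamard (fun z => f x z c v) (fun z => dy f x z c v)).
  - rewrite Rplus_0_r. reflexivity.
  - intro; apply is_derive_dy, Hpf.
  - intro; apply continuous_cont4_comp; [apply smooth_cont4; smooth_derivs | continuous_poly ..].
Qed.

Lemma quot_eta_spec x y u v :
  v * quot_eta f x y u v = f x y u v - f x y u 0.
Proof.
  rewrite quot_eta_RInt, (hadamard (fun z => f x y u z) (fun z => deta f x y u z)).
  - rewrite Rplus_0_r. reflexivity.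
  - intro; apply is_derive_deta, Hpf.
  - intro; apply continuous_cont4_comp; [apply smooth_cont4; smooth_derivs | continuous_poly ..].
Qed.

End QuotientSpec.

(** * Invariance under sigma *)

Lemma sigma_invariant_periodic s f :
  sigma_invariant s f -> forall x y u v, f (x + 2 * PI) y u v = f x y u v.
Proof.
  destruct s; simpl; intros Hf x y u v; [apply Hf|].
  replace (f (x + 2 * PI) y u v) with (f (x + PI + PI) (- - y) u (- - v))
    by (rewrite !Ropp_involutive; f_equal; ring).
  rewrite !Hf. reflexivity.
Qed.

Lemma sigma_invariant_dxi s f : sigma_invariant s f -> sigma_invariant s (dxi f).
Proof. destruct s; simpl; intros Hf x y u v; apply Derive_ext; intro; apply Hf. Qed.

Lemma sigma_invariant_quot_xi s c f : sigma_invariant s f -> sigma_invariant s (quot_xi c f).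
Proof.
  intro Hf. pose proof (sigma_invariant_dxi s f Hf) as Hd.
  destruct s; simpl in *; intros x y u v; rewrite !quot_xi_RInt; apply RInt_ext; intros; apply Hd.
Qed.

Lemma Derive_reflect (f g : R -> R) (e w : R) :
  (forall z, f (- z) = e * g z) -> ex_derive g w -> Derive f (- w) = - e * Derive g w.
Proof.
  intros Hfg Hg.
  rewrite (Derive_ext f (fun z => e * g (- z))).
  - apply is_derive_unique. auto_derive.
    + rewrite Ropp_involutive. exact Hg.
    + rewrite Ropp_involutive. change (fun x => g x) with g. ring.
  - intro z. rewrite <- Hfg, Ropp_involutive. reflexivity.
Qed.

Section Reverse.

Variable f : F4.
Hypotheses (Hf : smooth f) (Hrev : sigma_invariant Reverse f).

Lemma dy_reverse x y u v : dy f (x + PI) (- y) u (- v) = - dy f x y u v.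
Proof.
  unfold dy. rewrite (Derive_reflect _ (fun t => f x t u v) 1).
  - ring.
  - intro z. rewrite Rmult_1_l. apply Hrev.
  - apply ex_derive_dy, smooth_has_partials, Hf.
Qed.

Lemma quot_y_reverse c x y u v : quot_y c f (x + PI) (- y) u (- v) = - quot_y c f x y u v.
Proof.
  rewrite !quot_y_RInt.
  rewrite (RInt_ext _ (fun t => opp (dy f x (y * t + 0) c v))).
  - apply (RInt_opp (V := R_CompleteNormedModule)), ex_RInt01. intro.
    apply continuous_cont4_comp; [apply smooth_cont4; smooth_derivs | continuous_poly ..].
  - intros t _. replace (- y * t + 0) with (- (y * t + 0)) by ring. apply dy_reverse.
Qed.

End Reverse.

Lemma sigma_invariant_quot_eta_y s c f :
  smooth f -> sigma_invariant s f -> sigma_invariant s (quot_eta (quot_y c f)).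
Proof.
  intros Hf Hinv. destruct s; simpl; intros x y u v; rewrite !quot_eta_RInt; apply RInt_ext;
    intros t _.
  - apply Derive_ext; intro z. rewrite !quot_y_RInt. apply RInt_ext; intros t' _.
    apply Derive_ext; intro z'. apply Hinv.
  - replace (- v * t + 0) with (- (v * t + 0)) by ring.
    unfold deta. rewrite (Derive_reflect _ (fun z => quot_y c f x y u z) (Ropp 1)).
    + rewrite Ropp_involutive, Rmult_1_l. reflexivity.
    + intro z. rewrite quot_y_reverse; auto. ring.
    + apply ex_derive_deta, smooth_has_partials, smooth_quot_y, Hf.
Qed.

(** * The commutant on a box around gamma *)

Lemma Derive_shift (g : R -> R) (a x : R) : Derive (fun t => g (t + a)) x = Derive g (x + a).
Proof.
  unfold Derive. f_equal. apply Lim_ext. intro h.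
  replace (x + h + a) with (x + a + h) by ring. reflexivity.
Qed.

Lemma eq_of_Derive_zero (phi : R -> R) (a b : R) :
  (forall t, ex_derive phi t) -> (forall t, Rmin a b < t < Rmax a b -> Derive phi t = 0) ->
  phi b = phi a.
Proof.
  intros Hd H0.
  destruct (MVT_gen phi a b (fun _ => 0)) as [t0 [_ Ht0]].
  - intros t Ht. rewrite <- (H0 t Ht). apply Derive_correct, Hd.
  - intros t _. apply continuity_pt_filterlim, (@ex_derive_continuous R_AbsRing R_NormedModule), Hd.
  - lra.
Qed.

Lemma periodic_ind (P : R -> Prop) (T : R) :
  0 < T -> (forall x, P (x + T) <-> P x) -> (forall x, 0 <= x <= T -> P x) ->
  forall x, P x.
Proof.
  intros HT Hper Hbase x.
  assert (Hshift : forall k y, P (y + T * IZR k) <-> P y).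
  { intro k; induction k as [|k IH|k IH] using Z.peano_ind; intro y.
    - rewrite Rmult_0_r, Rplus_0_r. reflexivity.
    - rewrite succ_IZR, <- (IH y), <- (Hper (y + T * IZR k)).
      replace (y + T * (IZR k + 1)) with (y + T * IZR k + T) by ring. reflexivity.
    - rewrite <- Z.sub_1_r, minus_IZR, <- (IH y), <- (Hper (y + T * (IZR k - 1))).
      replace (y + T * (IZR k - 1) + T) with (y + T * IZR k) by ring. reflexivity. }
  destruct (Zfloor_bound (x / T)) as [Hlo Hhi].
  replace x with (x - T * IZR (Zfloor (x / T)) + T * IZR (Zfloor (x / T))) by ring.
  apply Hshift, Hbase.
  assert (Hx : x = T * (x / T)) by (field; lra).
  split; nra.
Qed.

Lemma box_in_open4 (U : R -> R -> R -> R -> Prop) c a b :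
  open4 U -> (forall x, a <= x <= b -> U x 0 c 0) ->
  exists d, 0 < d /\ forall x y u v, a <= x <= b ->
    Rabs y < d -> Rabs (u - c) < d -> Rabs v < d -> U x y u v.
Proof.
  intros HU Hseg.
  assert (Hd : forall t, exists d : posreal, a <= t <= b -> forall x y u v,
    Rabs (x - t) < d -> Rabs (y - 0) < d -> Rabs (u - c) < d -> Rabs (v - 0) < d ->
    U x y u v).
  { intro t. destruct (Rle_dec a t) as [Hat|Hat]; [destruct (Rle_dec t b) as [Htb|Htb]|].
    - destruct (HU t 0 c 0 (Hseg t (conj Hat Htb))) as [d [Hd H]].
      exists (mkposreal d Hd). intros _. exact H.
    - exists (mkposreal 1 Rlt_0_1). intros []; lra.
    - exists (mkposreal 1 Rlt_0_1). intros []; lra. }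
  set (delta := fun t => proj1_sig (constructive_indefinite_description _ (Hd t))).
  assert (Hdelta : forall t, a <= t <= b -> forall x y u v,
    Rabs (x - t) < delta t -> Rabs (y - 0) < delta t -> Rabs (u - c) < delta t ->
    Rabs (v - 0) < delta t -> U x y u v).
  { intro t. unfold delta. destruct (constructive_indefinite_description _ (Hd t)); auto. }
  destruct (compactness_value_1d a b delta) as [d Hcomp].
  exists d; split; [apply cond_pos|].
  intros x y u v Hx Hy Hu Hv. apply NNPP; intro Hn. apply (Hcomp x Hx).
  intros [t [Ht [H1 H2]]]. apply Hn.
  apply (Hdelta t Ht); rewrite ?Rminus_0_r; lra.
Qed.

Definition yeta_deriv (f : F4) : F4 :=
  fun x y u v => deta f x y u v * v - dy f x y u v * y.

Lemma poisson_xi_fun f x y u v : poisson f xi_fun x y u v = - dx f x y u v.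
Proof.
  unfold poisson, xi_fun, dx, dy, dxi, deta. rewrite !Derive_const, Derive_id. ring.
Qed.

Lemma poisson_yeta_fun f x y u v : poisson f yeta_fun x y u v = yeta_deriv f x y u v.
Proof.
  unfold poisson, yeta_fun, yeta_deriv, dx, dy, dxi, deta.
  rewrite !Derive_const, (Derive_ext (fun t => t * v) (fun t => v * t))
    by (intro; apply Rmult_comm).
  rewrite !Derive_scal, !Derive_id. ring.
Qed.

Definition commutes_on_box (c d : R) (f : F4) : Prop :=
  forall x y u v, Rabs y < d -> Rabs (u - c) < d -> Rabs v < d ->
    dx f x y u v = 0 /\ yeta_deriv f x y u v = 0.

Lemma Ccl_commutes_on_box s c f : Ccl s c f -> exists d, 0 < d /\ commutes_on_box c d f.
Proof.
  intros [[_ Hinv] [U [HU [Hgamma Hcomm]]]].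
  destruct (box_in_open4 U c 0 (2 * PI) HU (fun x _ => Hgamma x)) as [d [Hd Hbox]].
  exists d; split; [exact Hd|]. intros x y u v Hy Hu Hv.
  pose proof (sigma_invariant_periodic s f Hinv) as Hper.
  apply (periodic_ind (fun x => dx f x y u v = 0 /\ yeta_deriv f x y u v = 0) (2 * PI)).
  - pose proof PI_RGT_0. lra.
  - intro x'. unfold dx, yeta_deriv, dy, deta.
    rewrite <- Derive_shift, (Derive_ext (fun t => f (t + 2 * PI) y u v) (fun t => f t y u v)),
      (Derive_ext (fun t => f (x' + 2 * PI) y u t) (fun t => f x' y u t)),
      (Derive_ext (fun t => f (x' + 2 * PI) t u v) (fun t => f x' t u v)) by (intro; apply Hper).
    reflexivity.
  - intros x' Hx'. destruct (Hcomm x' y u v (Hbox x' y u v Hx' Hy Hu Hv)) as [H1 H2].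
    rewrite poisson_xi_fun in H1. rewrite poisson_yeta_fun in H2. split; lra.
Qed.

Lemma open4_box c d : open4 (fun _ y u v => Rabs y < d /\ Rabs (u - c) < d /\ Rabs v < d).
Proof.
  intros x y u v [Hy [Hu Hv]].
  exists (Rmin (d - Rabs y) (Rmin (d - Rabs (u - c)) (d - Rabs v))).
  split; [repeat apply Rmin_pos; lra|].
  intros x' y' u' v' _ H2 H3 H4.
  pose proof (Rmin_l (d - Rabs y) (Rmin (d - Rabs (u - c)) (d - Rabs v))).
  pose proof (Rmin_r (d - Rabs y) (Rmin (d - Rabs (u - c)) (d - Rabs v))).
  pose proof (Rmin_l (d - Rabs (u - c)) (d - Rabs v)).
  pose proof (Rmin_r (d - Rabs (u - c)) (d - Rabs v)).
  pose proof (Rabs_triang_inv y' y). pose proof (Rabs_triang_inv v' v).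
  pose proof (Rabs_triang_inv (u' - c) (u - c)).
  replace (u' - c - (u - c)) with (u' - u) in * by ring.
  repeat split; lra.
Qed.

Lemma near_gamma_box c d (P : R -> R -> R -> R -> Prop) : 0 < d ->
  (forall x y u v, Rabs y < d -> Rabs (u - c) < d -> Rabs v < d -> P x y u v) ->
  near_gamma c P.
Proof.
  intros Hd HP. exists (fun _ y u v => Rabs y < d /\ Rabs (u - c) < d /\ Rabs v < d).
  split; [apply open4_box|]. split.
  - intro. rewrite Rminus_eq_0, Rabs_R0. auto.
  - intros x y u v [Hy [Hu Hv]]. auto.
Qed.

Lemma commutes_on_box_Ccl s c d f :
  Cinf_quot s f -> 0 < d -> commutes_on_box c d f -> Ccl s c f.
Proof.
  intros Hf Hd Hcomm. split; [exact Hf|].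
  apply (near_gamma_box c d); [exact Hd|]. intros x y u v Hy Hu Hv.
  rewrite poisson_xi_fun, poisson_yeta_fun.
  destruct (Hcomm x y u v Hy Hu Hv) as [-> ->]. split; ring.
Qed.

Lemma commutes_on_box_x_independent c d f x x' y u v :
  smooth f -> commutes_on_box c d f ->
  Rabs y < d -> Rabs (u - c) < d -> Rabs v < d -> f x' y u v = f x y u v.
Proof.
  intros Hf Hcomm Hy Hu Hv. apply (eq_of_Derive_zero (fun t => f t y u v)).
  - intro t. apply ex_derive_dx, smooth_has_partials, Hf.
  - intros t _. apply (Hcomm t y u v Hy Hu Hv).
Qed.

(** * Decomposition of K *)

Lemma cont4_eq0_of_dense f x y u v : cont4 f ->
  (forall e, 0 < e -> exists x' y' u' v', Rabs (x' - x) < e /\ Rabs (y' - y) < e /\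
     Rabs (u' - u) < e /\ Rabs (v' - v) < e /\ f x' y' u' v' = 0) ->
  f x y u v = 0.
Proof.
  intros Hf Hdense. destruct (Req_dec (f x y u v) 0) as [|Hne]; [assumption|].
  destruct (Hf x y u v _ (Rabs_pos_lt _ Hne)) as [e [He Hball]].
  destruct (Hdense e He) as [x' [y' [u' [v' [H1 [H2 [H3 [H4 H0]]]]]]]].
  specialize (Hball _ _ _ _ H1 H2 H3 H4).
  rewrite H0, Rminus_0_l, Rabs_Ropp in Hball. lra.
Qed.

Lemma exists_nonzero_near r d e : Rabs r < d -> 0 < e ->
  exists r', r' <> 0 /\ Rabs (r' - r) < e /\ Rabs r' < d.
Proof.
  intros Hr He. destruct (Req_dec r 0) as [->|Hr0].
  - rewrite Rabs_R0 in Hr. pose proof (Rmin_l e d). pose proof (Rmin_r e d).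
    pose proof (Rmin_pos e d He Hr).
    exists (Rmin e d / 2). rewrite Rminus_0_r, Rabs_pos_eq by lra. repeat split; lra.
  - exists r. rewrite Rminus_eq_0, Rabs_R0. auto.
Qed.

Lemma cont4_yeta_deriv f : smooth f -> cont4 (yeta_deriv f).
Proof.
  intro Hf. apply continuous_cont4. intro p. unfold uncurry4, yeta_deriv.
  apply continuous_Rminus; apply continuous_Rmult; try continuous_proj.
  - apply (cont4_continuous (deta f)), smooth_cont4, smooth_deta, Hf.
  - apply (cont4_continuous (dy f)), smooth_cont4, smooth_dy, Hf.
Qed.

Section BoxVanishing.

Variables c d : R.

Lemma box_eq0_of_mul_xi f : cont4 f ->
  (forall x y u v, Rabs y < d -> Rabs (u - c) < d -> Rabs v < d -> (u - c) * f x y u v = 0) ->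
  forall x y u v, Rabs y < d -> Rabs (u - c) < d -> Rabs v < d -> f x y u v = 0.
Proof.
  intros Hf Hmul x y u v Hy Hu Hv. apply cont4_eq0_of_dense; [exact Hf|]. intros e He.
  destruct (exists_nonzero_near (u - c) d e Hu He) as [r [Hr0 [Hr Hrd]]].
  exists x, y, (r + c), v. rewrite !Rminus_eq_0, Rabs_R0.
  replace (r + c - u) with (r - (u - c)) by ring. repeat split; auto.
  specialize (Hmul x y (r + c) v Hy). replace (r + c - c) with r in Hmul by ring.
  destruct (Rmult_integral _ _ (Hmul Hrd Hv)); [contradiction | assumption].
Qed.

Lemma box_eq0_of_mul_yeta f : cont4 f ->
  (forall x y u v, Rabs y < d -> Rabs (u - c) < d -> Rabs v < d -> y * v * f x y u v = 0) ->
  forall x y u v, Rabs y < d -> Rabs (u - c) < d -> Rabs v < d -> f x y u v = 0.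
Proof.
  intros Hf Hmul x y u v Hy Hu Hv. apply cont4_eq0_of_dense; [exact Hf|]. intros e He.
  destruct (exists_nonzero_near y d e Hy He) as [y' [Hy0 [Hy' Hyd]]].
  destruct (exists_nonzero_near v d e Hv He) as [v' [Hv0 [Hv' Hvd]]].
  exists x, y', u, v'. rewrite !Rminus_eq_0, Rabs_R0. repeat split; auto.
  destruct (Rmult_integral _ _ (Hmul x y' u v' Hyd Hu Hvd)) as [Hyv|]; [|assumption].
  destruct (Rmult_integral _ _ Hyv); contradiction.
Qed.

End BoxVanishing.

Lemma locally_Rabs_lt d r : Rabs r < d -> locally r (fun t => Rabs t < d).
Proof.
  intro Hr. assert (He : 0 < d - Rabs r) by lra.
  exists (mkposreal _ He). intros t Ht. change (Rabs (t - r) < d - Rabs r) in Ht.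
  pose proof (Rabs_triang_inv t r). lra.
Qed.

Lemma strictly_between_0_bounds d v t :
  Rabs v < d -> Rmin 0 v < t < Rmax 0 v -> t <> 0 /\ Rabs t < d.
Proof.
  intros Hv Ht. destruct (Rabs_def2 _ _ Hv).
  unfold Rmin, Rmax in Ht. destruct (Rle_dec 0 v); split; try lra; apply Rabs_def1; lra.
Qed.

Lemma Rabs_mul_unit_lt d y t : Rabs y < d -> 0 < t < 1 -> Rabs (y * t) < d.
Proof.
  intros Hy Ht. rewrite Rabs_mult, (Rabs_pos_eq t) by lra.
  pose proof (Rabs_pos y). nra.
Qed.

Lemma Derive_scal_minus (g h1 h2 : R -> R) (k z : R) :
  (forall s, k * g s = h1 s - h2 s) -> ex_derive h1 z -> ex_derive h2 z ->
  k * Derive g z = Derive h1 z - Derive h2 z.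
Proof.
  intros E H1 H2. rewrite <- Derive_scal, <- Derive_minus by assumption.
  apply Derive_ext, E.
Qed.

Section Decomposition.

Variables (c d : R) (K : F4).
Hypotheses (HK : smooth K) (Hd : 0 < d) (HK0 : forall x, K x 0 c 0 = 0)
  (Hcomm : commutes_on_box c d K).

Let HpK := smooth_has_partials K HK.
Let HKc : Rabs (c - c) < d.
Proof. rewrite Rminus_eq_0, Rabs_R0. exact Hd. Qed.
Let H0d : Rabs 0 < d.
Proof. rewrite Rabs_R0. exact Hd. Qed.

Lemma K_on_eta_axis x v : Rabs v < d -> K x 0 c v = 0.
Proof.
  intro Hv. rewrite <- (HK0 x) at 2. apply (eq_of_Derive_zero (fun t => K x 0 c t)).
  - intro t. apply ex_derive_deta, HpK.
  - intros t Ht. destruct (strictly_between_0_bounds d v t Hv Ht) as [Ht0 Htd].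
    destruct (Hcomm x 0 c t H0d HKc Htd) as [_ H]. unfold yeta_deriv in H.
    rewrite Rmult_0_r, Rminus_0_r in H.
    destruct (Rmult_integral _ _ H); [assumption | contradiction].
Qed.

Lemma K_on_y_axis x y : Rabs y < d -> K x y c 0 = 0.
Proof.
  intro Hy. rewrite <- (HK0 x) at 2. apply (eq_of_Derive_zero (fun t => K x t c 0)).
  - intro t. apply ex_derive_dy, HpK.
  - intros t Ht. destruct (strictly_between_0_bounds d y t Hy Ht) as [Ht0 Htd].
    destruct (Hcomm x t c 0 Htd HKc H0d) as [_ H]. unfold yeta_deriv in H.
    rewrite Rmult_0_r, Rminus_0_l in H. apply Ropp_eq_0_compat in H.
    rewrite Ropp_involutive in H.
    destruct (Rmult_integral _ _ H); [assumption | contradiction].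
Qed.

Lemma dy_K_on_y_axis x y : Rabs y < d -> dy K x y c 0 = 0.
Proof.
  intro Hy. unfold dy. rewrite (Derive_ext_loc _ (fun _ => 0)); [apply Derive_const|].
  generalize (locally_Rabs_lt d y Hy). apply filter_imp. intros t Ht. apply K_on_y_axis, Ht.
Qed.

Lemma quot_y_on_y_axis x y u : Rabs y < d -> quot_y c K x y u 0 = 0.
Proof.
  intro Hy. rewrite quot_y_RInt, (RInt_ext _ (fun _ => 0)).
  - rewrite RInt_const. apply Rmult_0_r.
  - intros t Ht. rewrite Rmin_left, Rmax_right in Ht by lra.
    rewrite Rplus_0_r. apply dy_K_on_y_axis, Rabs_mul_unit_lt; assumption.
Qed.

Lemma yeta_mul_quot_eta_y x y u v : Rabs y < d -> Rabs v < d ->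
  y * v * quot_eta (quot_y c K) x y u v = K x y c v.
Proof.
  intros Hy Hv.
  rewrite Rmult_assoc, quot_eta_spec, quot_y_on_y_axis, Rminus_0_r, quot_y_spec,
    K_on_eta_axis, Rminus_0_r by auto using smooth_quot_y.
  reflexivity.
Qed.

Lemma dx_quot_xi x y u v :
  (u - c) * dx (quot_xi c K) x y u v = dx K x y u v - dx K x y c v.
Proof.
  apply (Derive_scal_minus (fun s => quot_xi c K s y u v) (fun s => K s y u v)
    (fun s => K s y c v)); [intro; apply quot_xi_spec, HK | apply ex_derive_dx, HpK ..].
Qed.

Lemma yeta_deriv_quot_xi x y u v :
  (u - c) * yeta_deriv (quot_xi c K) x y u v = yeta_deriv K x y u v - yeta_deriv K x y c v.
Proof.
  assert (Eeta : (u - c) * deta (quot_xi c K) x y u v = deta K x y u v - deta K x y c v).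
  { apply (Derive_scal_minus (fun s => quot_xi c K x y u s) (fun s => K x y u s)
      (fun s => K x y c s)); [intro; apply quot_xi_spec, HK | apply ex_derive_deta, HpK ..]. }
  assert (Ey : (u - c) * dy (quot_xi c K) x y u v = dy K x y u v - dy K x y c v).
  { apply (Derive_scal_minus (fun s => quot_xi c K x s u v) (fun s => K x s u v)
      (fun s => K x s c v)); [intro; apply quot_xi_spec, HK | apply ex_derive_dy, HpK ..]. }
  unfold yeta_deriv. rewrite Rmult_minus_distr_l, <- !Rmult_assoc, Eeta, Ey. ring.
Qed.

Lemma commutes_on_box_quot_xi : commutes_on_box c d (quot_xi c K).
Proof.
  pose proof (smooth_quot_xi c K HK) as Ha.
  intros x y u v Hy Hu Hv. split.
  - apply (box_eq0_of_mul_xi c d); auto; [apply smooth_cont4, smooth_dx, Ha|].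
    intros x' y' u' v' Hy' Hu' Hv'. rewrite dx_quot_xi.
    rewrite (proj1 (Hcomm x' y' u' v' Hy' Hu' Hv')), (proj1 (Hcomm x' y' c v' Hy' HKc Hv')).
    apply Rminus_0_r.
  - apply (box_eq0_of_mul_xi c d); auto; [apply cont4_yeta_deriv, Ha|].
    intros x' y' u' v' Hy' Hu' Hv'. rewrite yeta_deriv_quot_xi.
    rewrite (proj2 (Hcomm x' y' u' v' Hy' Hu' Hv')), (proj2 (Hcomm x' y' c v' Hy' HKc Hv')).
    apply Rminus_0_r.
Qed.

Lemma dx_quot_eta_y x y u v : Rabs y < d -> Rabs v < d ->
  y * v * dx (quot_eta (quot_y c K)) x y u v = dx K x y c v.
Proof.
  intros Hy Hv. unfold dx. rewrite <- Derive_scal.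
  apply Derive_ext. intro t. apply yeta_mul_quot_eta_y; assumption.
Qed.

Lemma yeta_deriv_quot_eta_y x y u v : Rabs y < d -> Rabs v < d ->
  y * v * yeta_deriv (quot_eta (quot_y c K)) x y u v = yeta_deriv K x y c v.
Proof.
  intros Hy Hv. pose (b := quot_eta (quot_y c K)).
  assert (Hb : has_partials b) by apply smooth_has_partials, smooth_quot_eta, smooth_quot_y, HK.
  assert (Ey : dy K x y c v = v * (b x y u v + y * dy b x y u v)).
  { unfold dy. rewrite (Derive_ext_loc _ (fun s => v * (s * b x s u v))).
    - rewrite Derive_scal, Derive_mult, Derive_id, Rmult_1_l;
        [reflexivity | apply ex_derive_id | apply ex_derive_dy, Hb].
    - generalize (locally_Rabs_lt d y Hy). apply filter_imp. intros s Hs.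
      change (K x s c v = v * (s * b x s u v)).
      rewrite <- (yeta_mul_quot_eta_y x s u v) by assumption. unfold b. ring. }
  assert (Ev : deta K x y c v = y * (b x y u v + v * deta b x y u v)).
  { unfold deta. rewrite (Derive_ext_loc _ (fun s => y * (s * b x y u s))).
    - rewrite Derive_scal, Derive_mult, Derive_id, Rmult_1_l;
        [reflexivity | apply ex_derive_id | apply ex_derive_deta, Hb].
    - generalize (locally_Rabs_lt d v Hv). apply filter_imp. intros s Hs.
      change (K x y c s = y * (s * b x y u s)).
      rewrite <- (yeta_mul_quot_eta_y x y u s) by assumption. unfold b. ring. }
  unfold yeta_deriv. rewrite Ey, Ev. unfold b. ring.
Qed.

Lemma commutes_on_box_quot_eta_y : commutes_on_box c d (quot_eta (quot_y c K)).
Proof.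
  pose proof (smooth_quot_eta _ (smooth_quot_y c K HK)) as Hb.
  intros x y u v Hy Hu Hv. split.
  - apply (box_eq0_of_mul_yeta c d); auto; [apply smooth_cont4, smooth_dx, Hb|].
    intros x' y' u' v' Hy' Hu' Hv'. rewrite dx_quot_eta_y by assumption.
    apply (Hcomm x' y' c v' Hy' HKc Hv').
  - apply (box_eq0_of_mul_yeta c d); auto; [apply cont4_yeta_deriv, Hb|].
    intros x' y' u' v' Hy' Hu' Hv'. rewrite yeta_deriv_quot_eta_y by assumption.
    apply (Hcomm x' y' c v' Hy' HKc Hv').
Qed.

Lemma hadamard_decomposition x y u v : Rabs y < d -> Rabs v < d ->
  K x y u v = quot_xi c K x y u v * (u - c) + quot_eta (quot_y c K) x y u v * (y * v).
Proof.
  intros Hy Hv.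
  transitivity ((u - c) * quot_xi c K x y u v + y * v * quot_eta (quot_y c K) x y u v);
    [|ring].
  rewrite quot_xi_spec, yeta_mul_quot_eta_y by assumption. ring.
Qed.

End Decomposition.

Theorem lemma2p2 (s : sigma_case) (c : R) (K : F4) :
  Ccl s c K ->
  (forall x, K x 0 c 0 = 0) ->
  (exists d, 0 < d /\ forall x x' y u v,
      Rabs y < d -> Rabs (u - c) < d -> Rabs v < d ->
      K x' y u v = K x y u v) /\
  exists a b : F4, Ccl s c a /\ Ccl s c b /\
    near_gamma c (fun x y u v =>
      K x y u v = a x y u v * (u - c) + b x y u v * (y * v)).
Proof.
  intros HK HK0.
  destruct (Ccl_commutes_on_box s c K HK) as [d [Hd Hcomm]].
  destruct HK as [[HKs HKinv] _].
  split.
  { exists d. split; [exact Hd|]. intros x x' y u v.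
    apply (commutes_on_box_x_independent c d K); assumption. }
  exists (quot_xi c K), (quot_eta (quot_y c K)). split; [|split].
  - apply (commutes_on_box_Ccl s c d); [split | exact Hd | ].
    + apply smooth_quot_xi, HKs.
    + apply sigma_invariant_quot_xi, HKinv.
    + apply (commutes_on_box_quot_xi c d K); assumption.
  - apply (commutes_on_box_Ccl s c d); [split | exact Hd | ].
    + apply smooth_quot_eta, smooth_quot_y, HKs.
    + apply sigma_invariant_quot_eta_y; assumption.
    + apply (commutes_on_box_quot_eta_y c d K); assumption.
  - apply (near_gamma_box c d); [exact Hd|]. intros x y u v Hy _ Hv.
    apply (hadamard_decomposition c d K); assumption.
Qed.
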